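(* Let $L, C_H, C_L, R_D, R_H, R_L, E_H, E_L$ be positive constants and set $$\alpha=\frac{1}{R_{DH}C_H},\qquad R_{DH}=\frac{R_DR_H}{R_D+R_H},\qquad \beta_H=\frac{E_H}{R_HC_H},\qquad \beta_L=\frac{E_L}{R_LC_L}.$$ Consider the system $$\dot x_1=-\frac{1}{L}x_3+\frac{1}{L}x_2u,\qquad \dot x_2=-\alpha x_2-\frac{1}{C_H}x_1u+\beta_H,\qquad \dot x_3=\frac{1}{C_L}x_1-\frac{1}{R_LC_L}x_3+\beta_L,$$ where $u=u(t)$ is any control with $u\in\mathcal L_\infty$ (an essentially bounded function of time). Then the system is uniformly stable, i.e. every solution $\xi(t)$ of the system (for this $u$) is uniformly stable: for every $\varepsilon>0$ there is $\delta>0$, independent of the initial time $t_0$, such that any solution $x(t)$ with $\|x(t_0)-\xi(t_0)\|<\delta$ satisfies $\|x(t)-\xi(t)\|<\varepsilon$ for all $t\ge t_0$.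
   Context: The system models a bidirectional buck-boost DC-DC converter: $x_1$ is the inductor current, $x_2$ the high-voltage-side capacitor voltage, $x_3$ the low-voltage-side capacitor voltage; $E_H,R_H$ are the high-voltage source and its internal resistance, $E_L,R_L$ the battery voltage and internal resistance, $R_D$ the load resistance. *)

From HB Require Import structures.
From mathcomp Require Import all_boot all_order all_algebra.
From mathcomp Require Import all_classical all_reals all_analysis.
Set Implicit Arguments. Unset Strict Implicit. Unset Printing Implicit Defensive.
Import Order.TTheory GRing.Theory Num.Theory.
Local Open Scope classical_set_scope.
Local Open Scope ring_scope.

Section BuckBoost.
Variable R : realType.

Definition R_DH (RD RH : R) : R := RD * RH / (RD + RH).
Definition alpha (RD RH CH : R) : R := 1 / (R_DH RD RH * CH).
Definition beta_H (EH RH CH : R) : R := EH / (RH * CH).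
Definition beta_L (EL RL CL : R) : R := EL / (RL * CL).

Definition Linf (u : R -> R) : Prop :=
  measurable_fun setT u /\
  exists M : R, {ae (@lebesgue_measure R), forall t, `|u t| <= M}.

(* Caratheodory (integral) form of  x' = g  on [t0, +oo):
   for every t >= t0, g is Lebesgue integrable on [t0, t] and
   x t = x t0 + \int_{[t0,t]} g. *)
Definition integral_sol (g x : R -> R) (t0 : R) : Prop :=
  forall t, t0 <= t ->
    (@lebesgue_measure R).-integrable `[t0, t] (EFin \o g) /\
    x t = x t0 + Rintegral (@lebesgue_measure R) `[t0, t] g.

Definition is_solution (L CH CL RD RH RL EH EL : R) (u : R -> R)
    (x1 x2 x3 : R -> R) (t0 : R) : Prop :=
  [/\ integral_sol (fun s => - (1 / L) * x3 s + (1 / L) * x2 s * u s) x1 t0,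
      integral_sol (fun s => - alpha RD RH CH * x2 s - (1 / CH) * x1 s * u s
                             + beta_H EH RH CH) x2 t0
    & integral_sol (fun s => (1 / CL) * x1 s - (1 / (RL * CL)) * x3 s
                             + beta_L EL RL CL) x3 t0].

Definition norm3 (a b c : R) : R := Num.sqrt (a ^+ 2 + b ^+ 2 + c ^+ 2).

End BuckBoost.

(* The error e = x - xi between two solutions solves the linear system
     L e1' = e2 u - e3,   C_H e2' = - alpha C_H e2 - e1 u,   C_L e3' = e1 - e3 / R_L,
   whose energy V = L e1^2 + C_H e2^2 + C_L e3^2 formally satisfies
   V' = -2 (alpha C_H e2^2 + e3^2 / R_L) <= 0: the coupling through u is skew.
   Solutions are only absolutely continuous, so V is not differentiated; instead, with
   P t = int_{t0}^t sum_i |e_i'|, writing e_i t + e_i s = 2 e_i r + O(P t - P s) inside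
   V t - V s = sum_i k_i (e_i t + e_i s) int_s^t e_i' gives
   V t - V s <= (sum_i k_i) (P t - P s)^2, and increments quadratically small with respect
   to a continuous nondecreasing P force V to be nonincreasing.  As V is equivalent to the
   squared Euclidean norm, delta = eps min(L, C_H, C_L) / (L + C_H + C_L) works for every
   t0. *)

From HB Require Import structures.
From mathcomp Require Import all_boot all_order all_algebra.
From mathcomp Require Import all_classical all_reals all_analysis.
From mathcomp Require Import ring lra.
Set Implicit Arguments. Unset Strict Implicit. Unset Printing Implicit Defensive.
Import Order.TTheory GRing.Theory Num.Theory numFieldNormedType.Exports.
Local Open Scope classical_set_scope.
Local Open Scope ring_scope.

Section MonotoneCriteria.
Variable R : realType.
Implicit Types (f P V : R -> R) (a b c : R).

Lemma le_locally_nonincreasing f a b : a <= b ->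
  (forall m, a <= m <= b -> exists2 d : R, 0 < d &
     forall s, a <= s <= b -> `|m - s| < d ->
       (s <= m -> f m <= f s) /\ (m <= s -> f s <= f m)) ->
  f b <= f a.
Proof.
move=> ab floc.
pose S := [set r | a <= r <= b /\ f r <= f a].
have Sa : S a by rewrite /S /= lexx ab.
have supS : has_sup S by split; [exists a | exists b => r [/andP[]]].
set m := sup S.
have am : a <= m := sup_upper_bound supS Sa.
have mb : m <= b by apply: ge_sup; [exists a | move=> r [/andP[]]].
have [d d0 fm] := floc m (introT andP (conj am mb)).
have fma : f m <= f a.
  have [r [/andP[ar rb] fra]] := sup_adherent d0 supS; rewrite -/m => mdr.
  have arb : a <= r <= b by rewrite ar rb.
  have rm : r <= m := sup_upper_bound supS (conj arb fra).
  have mrd : `|m - r| < d by rewrite ger0_norm ?subr_ge0 //; lra.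
  exact: le_trans ((fm r arb mrd).1 rm) fra.
suff -> : b = m by [].
apply/eqP; rewrite eq_le mb andbT leNgt; apply/negP => mltb.
pose t := Num.min b (m + d / 2).
have mt : m < t by rewrite lt_min mltb ltrDl divr_gt0.
have tb : t <= b by rewrite ge_min lexx.
have atb : a <= t <= b by rewrite tb (le_trans am) // ltW.
have mtd : `|m - t| < d.
  have tmd : t <= m + d / 2 by rewrite ge_min lexx orbT.
  rewrite distrC ger0_norm ?subr_ge0 ?(ltW mt) //; lra.
have St : S t.
  by split; last exact: le_trans ((fm t atb mtd).2 (ltW mt)) fma.
by have := sup_upper_bound supS St; rewrite leNgt mt.
Qed.

Lemma within_continuous_dist f (A : set R) x : {within A, continuous f} -> A x ->
  forall e : R, 0 < e ->
  exists2 d : R, 0 < d & forall y, A y -> `|x - y| < d -> `|f x - f y| < e.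
Proof.
move=> cf Ax e e0.
have /cvgrPdist_lt/(_ e e0) := (@subspace_continuousP _ A _ f).1 cf x Ax.
rewrite near_withinE => /nbhs_ballP[d /= d0 fd].
by exists d => // y Ay xy; apply: fd.
Qed.

Lemma le_sq_increments V P a b c : a <= b -> 0 <= c ->
  (forall s t, a <= s -> s <= t -> t <= b -> P s <= P t) ->
  {within `[a, b], continuous P} ->
  (forall s t, a <= s -> s <= t -> t <= b -> V t - V s <= c * (P t - P s) ^+ 2) ->
  V b <= V a.
Proof.
move=> ab c0 Pmono Pcont dV.
have c1 : 0 < c + 1 by lra.
(* Where P moves by less than eps / (c + 1), V moves by at most eps times as much. *)
have slope_le (eps : R) : 0 < eps -> V b - eps * P b <= V a - eps * P a.
  move=> eps0; apply: (@le_locally_nonincreasing (fun r => V r - eps * P r)) => // m /andP[am mb].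
  have small_step s t : a <= s -> s <= t -> t <= b -> P t - P s < eps / (c + 1) ->
      V t - eps * P t <= V s - eps * P s.
    move=> as_ st tb Pst.
    have dP : 0 <= P t - P s by rewrite subr_ge0 Pmono.
    have ce : c * (eps / (c + 1)) <= eps by rewrite mulrA ler_pdivrMr //; nra.
    have quad_le_lin : c * (P t - P s) ^+ 2 <= eps * (P t - P s).
      rewrite expr2 mulrA ler_wpM2r // (le_trans _ ce) // ler_wpM2l // ltW //.
    have := dV s t as_ st tb; lra.
  have Am : `[a, b]%classic m by rewrite /= in_itv /= am mb.
  have [d d0 Pd] := within_continuous_dist Pcont Am (divr_gt0 eps0 c1).
  exists d => // s /andP[as_ sb] msd.
  have As : `[a, b]%classic s by rewrite /= in_itv /= as_ sb.
  have := Pd s As msd; rewrite ltr_norml => /andP[Pl Pr].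
  split => [sm | ms]; apply: small_step => //; lra.
have dP : 0 <= P b - P a by rewrite subr_ge0 Pmono.
apply/ler_addgt0Pr => r r0.
have dP1 : 0 < P b - P a + 1 by lra.
have := slope_le (r / (P b - P a + 1)) (divr_gt0 r0 dP1).
have : r / (P b - P a + 1) * (P b - P a) <= r by rewrite mulrAC ler_pdivrMr //; nra.
lra.
Qed.
End MonotoneCriteria.

Section RealIntegrals.
Context d (T : measurableType d) (R : realType) (mu : {measure set T -> \bar R}).
Variables (D : set T) (mD : measurable D).

Lemma integrableZl_real (c : R) (f : T -> R) : mu.-integrable D (EFin \o f) ->
  mu.-integrable D (EFin \o (fun x => c * f x)).
Proof. by move=> fint; apply: eq_integrable (integrableZl mD c fint) => //=. Qed.

Lemma integrable_sumr (I : Type) (s : seq I) (h : I -> T -> R) :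
  (forall i, mu.-integrable D (EFin \o h i)) ->
  mu.-integrable D (EFin \o (fun x => \sum_(i <- s) h i x)).
Proof.
move=> hint; apply: eq_integrable (integrable_sum mD s (fun i _ => hint i)) => //= x _.
by rewrite sumEFin.
Qed.

Lemma Rintegral_sum (I : Type) (s : seq I) (h : I -> T -> R) :
  (forall i, mu.-integrable D (EFin \o h i)) ->
  \int[mu]_(x in D) \sum_(i <- s) h i x = \sum_(i <- s) \int[mu]_(x in D) h i x.
Proof.
move=> hint; rewrite /Rintegral; under eq_integral do rewrite -sumEFin.
rewrite integral_sum // sum_fine // => i _.
exact: integrable_fin_num (hint i).
Qed.
End RealIntegrals.

Section IntegralSolutions.
Variable R : realType.
Local Notation mu := (@lebesgue_measure R).
Implicit Types (g h x y : R -> R) (a s t tau : R).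

Lemma Rintegral_itv_split h a s t : a <= s -> s <= t ->
  mu.-integrable `[a, t] (EFin \o h) ->
  \int[mu]_(r in `[a, t]) h r = \int[mu]_(r in `[a, s]) h r + \int[mu]_(r in `[s, t]) h r.
Proof.
move=> as_ st hint.
have := @Rintegral_itvB R h (BLeft a) (BRight t) s hint.
rewrite !bnd_simp Rintegral_itv_obnd_cbnd => [/(_ as_ st) <-|]; first by rewrite subrKC.
by apply: integrableS hint => //; apply: subset_itvr; rewrite bnd_simp.
Qed.

Lemma integral_sol_increment g x t0 s t : integral_sol g x t0 -> t0 <= s -> s <= t ->
  mu.-integrable `[s, t] (EFin \o g) /\ x t - x s = \int[mu]_(r in `[s, t]) g r.
Proof.
move=> xsol t0s st.
have [gint xt] := xsol t (le_trans t0s st).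
have [_ xs] := xsol s t0s.
split; first by apply: integrableS gint => //; apply: subset_itvr; rewrite bnd_simp.
by rewrite xt xs (Rintegral_itv_split t0s st gint); ring.
Qed.

Lemma integral_solW g x tau t0 : tau <= t0 -> integral_sol g x tau -> integral_sol g x t0.
Proof.
move=> taut0 xsol t t0t.
have [gint dx] := integral_sol_increment xsol taut0 t0t.
by split => //; rewrite -dx subrKC.
Qed.

Lemma integral_solB g h x y t0 : integral_sol g x t0 -> integral_sol h y t0 ->
  integral_sol (fun r => g r - h r) (fun r => x r - y r) t0.
Proof.
move=> xsol ysol t t0t.
have [gint xt] := xsol t t0t; have [hint yt] := ysol t t0t.
split; first by apply: eq_integrable (integrableB _ gint hint) => //=.
by rewrite RintegralB // xt yt; ring.
Qed.
End IntegralSolutions.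

Section EnergyEstimate.
Variables (R : realType) (I : finType) (k : I -> R) (e F : I -> R -> R) (t0 : R).
Hypothesis k_ge0 : forall i, 0 <= k i.
Hypothesis e_sol : forall i, integral_sol (F i) (e i) t0.
Hypothesis dissipative : forall r, t0 <= r -> \sum_i k i * e i r * F i r <= 0.
Local Notation mu := (@lebesgue_measure R).

Let energy r : R := \sum_i k i * e i r ^+ 2.
Let speed r : R := \sum_i `|F i r|.
Let P r : R := \int[mu]_(x in `[t0, r]) speed x.

Let F_int i s t : t0 <= s -> s <= t -> mu.-integrable `[s, t] (EFin \o F i).
Proof. by move=> t0s st; have [] := integral_sol_increment (e_sol i) t0s st. Qed.

Let speed_int s t : t0 <= s -> s <= t -> mu.-integrable `[s, t] (EFin \o speed).
Proof. by move=> t0s st; apply: integrable_sumr => // i; apply: integrable_norm; apply: F_int. Qed.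

Let P_increment s t : t0 <= s -> s <= t -> P t - P s = \int[mu]_(x in `[s, t]) speed x.
Proof.
move=> t0s st.
by rewrite /P (Rintegral_itv_split t0s st (speed_int (lexx t0) (le_trans t0s st))) addrAC subrr add0r.
Qed.

Let P_nondecreasing s t : t0 <= s -> s <= t -> P s <= P t.
Proof.
move=> t0s st; rewrite -subr_ge0 P_increment //.
by apply: Rintegral_ge0 => x _; apply: sumr_ge0 => i _.
Qed.

Let e_increment_le i s t : t0 <= s -> s <= t -> `|e i t - e i s| <= P t - P s.
Proof.
move=> t0s st; have [Fint ->] := integral_sol_increment (e_sol i) t0s st.
rewrite P_increment //; apply: le_trans (le_normr_Rintegral _ Fint) _ => //.
apply: le_Rintegral => //; first exact: integrable_norm.
  exact: speed_int.
by move=> x _; rewrite /speed (bigD1 i) //= lerDl sumr_ge0.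
Qed.

Let k_le_sum i : k i <= \sum_j k j.
Proof. by rewrite (bigD1 i) //= lerDl sumr_ge0. Qed.

Let midpoint_bound s r t : t0 <= s -> s <= r -> r <= t ->
  \sum_i k i * (e i t + e i s) * F i r <= (\sum_i k i) * (P t - P s) * speed r.
Proof.
move=> t0s sr rt.
have t0r := le_trans t0s sr.
have -> : \sum_i k i * (e i t + e i s) * F i r =
    2 * (\sum_i k i * e i r * F i r) + \sum_i k i * (e i t - e i r - (e i r - e i s)) * F i r.
  by rewrite mulr_sumr -big_split /=; apply: eq_bigr => i _; ring.
rewrite /speed [X in _ <= X]mulr_sumr -[X in _ <= X]add0r; apply: lerD.
  by rewrite pmulr_rle0 // dissipative.
apply: ler_sum => i _; apply: le_trans (ler_norm _) _.
rewrite !normrM (ger0_norm (k_ge0 i)) ler_wpM2r // ler_pM ?k_le_sum //.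
apply: le_trans (ler_normB _ _) _.
have := e_increment_le i t0r rt; have := e_increment_le i t0s sr; lra.
Qed.

Let energy_increment s t : t0 <= s -> s <= t ->
  energy t - energy s <= (\sum_i k i) * (P t - P s) ^+ 2.
Proof.
move=> t0s st.
have Fint i := F_int i t0s st.
have -> : energy t - energy s =
    \int[mu]_(r in `[s, t]) \sum_i k i * (e i t + e i s) * F i r.
  rewrite Rintegral_sum //; last by move=> i; exact: integrableZl_real.
  rewrite /energy -sumrB.
  apply: eq_bigr => i _; rewrite RintegralZl //.
  have [_ <-] := integral_sol_increment (e_sol i) t0s st; ring.
rewrite expr2 mulrA [X in _ <= _ * X]P_increment // -RintegralZl //; last exact: speed_int.
apply: le_Rintegral => //.
- by apply: integrable_sumr => // i; apply: integrableZl_real.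
- by apply: integrableZl_real => //; exact: speed_int.
- move=> r /=; rewrite in_itv /= => /andP[sr rt].
  exact: midpoint_bound t0s sr rt.
Qed.

Lemma energy_nonincreasing t : t0 <= t -> energy t <= energy t0.
Proof.
move=> t0t; apply: (@le_sq_increments _ energy P t0 t (\sum_i k i)) => //.
- exact: sumr_ge0.
- by move=> s r t0s sr _; apply: P_nondecreasing.
- exact: parameterized_integral_continuous t0t (speed_int (lexx t0) t0t).
- by move=> s r t0s sr _; apply: energy_increment.
Qed.
End EnergyEstimate.

Lemma integral_sol_ext (R : realType) (g h x : R -> R) (t0 : R) :
  (forall r, g r = h r) -> integral_sol g x t0 -> integral_sol h x t0.
Proof.
move=> gh xsol t t0t; have [gint ->] := xsol t t0t.
split; first by apply: eq_integrable gint => //= r _; rewrite gh.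
by congr (_ + _); apply: eq_Rintegral => r _; rewrite gh.
Qed.

Lemma alpha_gt0 (R : realType) (RD RH CH : R) :
  0 < RD -> 0 < RH -> 0 < CH -> 0 < alpha RD RH CH.
Proof.
move=> RD0 RH0 CH0.
by rewrite /alpha /R_DH !(divr_gt0, mulr_gt0, addr_gt0) ?ltr01.
Qed.

Section BuckBoostError.
Variables (R : realType) (L CH CL RD RH RL EH EL : R) (u : R -> R).
Hypotheses (hL : 0 < L) (hCH : 0 < CH) (hCL : 0 < CL) (hRD : 0 < RD) (hRH : 0 < RH)
  (hRL : 0 < RL).
Variables (xi1 xi2 xi3 x1 x2 x3 : R -> R) (tau t0 : R).
Hypotheses (taut0 : tau <= t0)
  (hxi : is_solution L CH CL RD RH RL EH EL u xi1 xi2 xi3 tau)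
  (hx : is_solution L CH CL RD RH RL EH EL u x1 x2 x3 t0).

Local Notation e1 r := (x1 r - xi1 r).
Local Notation e2 r := (x2 r - xi2 r).
Local Notation e3 r := (x3 r - xi3 r).
Let e (i : 'I_3) r := [:: e1 r; e2 r; e3 r]`_i.
Let k (i : 'I_3) := [:: L; CH; CL]`_i.

(* The sources beta_H, beta_L cancel in the difference of the two right-hand sides. *)
Let F (i : 'I_3) r := [:: (e2 r * u r - e3 r) / L;
                        - alpha RD RH CH * e2 r - e1 r * u r / CH;
                        (e1 r - e3 r / RL) / CL]`_i.

Let error_sol i : integral_sol (F i) (e i) t0.
Proof.
case: hx hxi => [x1sol x2sol x3sol] [xi1sol xi2sol xi3sol].
case: i => -[|[|[|//]]] hi;
  [ have := integral_solB x1sol (integral_solW taut0 xi1sol)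
  | have := integral_solB x2sol (integral_solW taut0 xi2sol)
  | have := integral_solB x3sol (integral_solW taut0 xi3sol) ];
  by apply: integral_sol_ext => r; rewrite /F /=; field; rewrite !gt_eqF.
Qed.

Let error_dissipative r : \sum_i k i * e i r * F i r <= 0.
Proof.
rewrite !big_ord_recr big_ord0 /= /F /=.
have -> : 0 + L * e1 r * ((e2 r * u r - e3 r) / L) +
    CH * e2 r * (- alpha RD RH CH * e2 r - e1 r * u r / CH) +
    CL * e3 r * ((e1 r - e3 r / RL) / CL) =
    - (CH * alpha RD RH CH * e2 r ^+ 2 + e3 r ^+ 2 / RL).
  by field; rewrite !gt_eqF.
have CHalpha : 0 < CH * alpha RD RH CH by rewrite mulr_gt0 ?alpha_gt0.
rewrite oppr_le0 addr_ge0 //; first by rewrite mulr_ge0 ?sqr_ge0 ?ltW.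
by rewrite divr_ge0 ?sqr_ge0 ?ltW.
Qed.

Lemma error_energy_nonincreasing t : t0 <= t ->
  L * e1 t ^+ 2 + CH * e2 t ^+ 2 + CL * e3 t ^+ 2 <=
  L * e1 t0 ^+ 2 + CH * e2 t0 ^+ 2 + CL * e3 t0 ^+ 2.
Proof.
have k_ge0 i : 0 <= k i by case: i => -[|[|[|//]]] hi; apply: ltW.
move/(energy_nonincreasing k_ge0 error_sol (fun r _ => error_dissipative r)).
by rewrite !big_ord_recr !big_ord0 /= !add0r.
Qed.
End BuckBoostError.

Lemma norm3_ltE (R : realType) (a b c r : R) : 0 < r ->
  (norm3 a b c < r) = (a ^+ 2 + b ^+ 2 + c ^+ 2 < r ^+ 2).
Proof.
by move=> r0; rewrite /norm3 -[in LHS](gtr0_norm r0) -sqrtr_sqr ltr_sqrt // exprn_gt0.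
Qed.

Lemma norm3_lt_of_weighted (R : realType) (L CH CL a1 a2 a3 b1 b2 b3 eps : R) :
  0 < L -> 0 < CH -> 0 < CL -> 0 < eps ->
  L * a1 ^+ 2 + CH * a2 ^+ 2 + CL * a3 ^+ 2 <= L * b1 ^+ 2 + CH * b2 ^+ 2 + CL * b3 ^+ 2 ->
  norm3 b1 b2 b3 < eps * Num.min (Num.min L CH) CL / (L + CH + CL) ->
  norm3 a1 a2 a3 < eps.
Proof.
move=> L0 CH0 CL0 eps0 weighted.
set m := Num.min (Num.min L CH) CL; set M := L + CH + CL.
have [mL mCH mCL] : [/\ m <= L, m <= CH & m <= CL] by rewrite !ge_min !lexx ?orbT.
have m0 : 0 < m by rewrite !lt_min L0 CH0 CL0.
have M0 : 0 < M by rewrite /M; lra.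
have mM : m <= M by rewrite /M; lra.
rewrite !norm3_ltE ?divr_gt0 ?mulr_gt0 //.
set Sa := a1 ^+ 2 + a2 ^+ 2 + a3 ^+ 2; set Sb := b1 ^+ 2 + b2 ^+ 2 + b3 ^+ 2 => Sb_lt.
have lower : m * Sa <= L * a1 ^+ 2 + CH * a2 ^+ 2 + CL * a3 ^+ 2.
  by rewrite /Sa; have := sqr_ge0 a1; have := sqr_ge0 a2; have := sqr_ge0 a3; nra.
have upper : L * b1 ^+ 2 + CH * b2 ^+ 2 + CL * b3 ^+ 2 <= M * Sb.
  by rewrite /Sb /M; have := sqr_ge0 b1; have := sqr_ge0 b2; have := sqr_ge0 b3; nra.
have delta_sq : M * (eps * m / M) ^+ 2 = m * eps ^+ 2 * (m / M).
  by field; rewrite gt_eqF.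
have mM1 : m / M <= 1 by rewrite ler_pdivrMr ?mul1r.
have Sb_delta : M * Sb < M * (eps * m / M) ^+ 2 by rewrite ltr_pM2l.
have shrink : m * eps ^+ 2 * (m / M) <= m * eps ^+ 2.
  by rewrite ler_piMr // mulr_ge0 ?sqr_ge0 ?ltW.
rewrite -(ltr_pM2l m0); lra.
Qed.

Local Close Scope classical_set_scope.

Theorem lemma1 (R : realType) (L CH CL RD RH RL EH EL : R)
  (hL : 0 < L) (hCH : 0 < CH) (hCL : 0 < CL) (hRD : 0 < RD) (hRH : 0 < RH)
  (hRL : 0 < RL) (hEH : 0 < EH) (hEL : 0 < EL)
  (u : R -> R) (hu : Linf u)
  (xi1 xi2 xi3 : R -> R) (tau : R)
  (hxi : is_solution L CH CL RD RH RL EH EL u xi1 xi2 xi3 tau) :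
  forall eps : R, 0 < eps ->
  exists delta : R, 0 < delta /\
    forall (t0 : R) (x1 x2 x3 : R -> R),
      tau <= t0 ->
      is_solution L CH CL RD RH RL EH EL u x1 x2 x3 t0 ->
      norm3 (x1 t0 - xi1 t0) (x2 t0 - xi2 t0) (x3 t0 - xi3 t0) < delta ->
      forall t, t0 <= t ->
        norm3 (x1 t - xi1 t) (x2 t - xi2 t) (x3 t - xi3 t) < eps.
Proof.
move=> eps eps0.
exists (eps * Num.min (Num.min L CH) CL / (L + CH + CL)); split.
  by rewrite !(divr_gt0, mulr_gt0, addr_gt0) // !lt_min hL hCH hCL.
move=> t0 x1 x2 x3 taut0 hx close t t0t.
apply: (norm3_lt_of_weighted hL hCH hCL eps0 _ close).
exact: (error_energy_nonincreasing hL hCH hCL hRD hRH hRL taut0 hxi hx t0t).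
Qed.
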